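(* Let $V$ be a finite-dimensional real vector space, regarded as an additive group, and let $S,T\subset V$. If the asymptotic cones satisfy $S\infty\cap T\infty=\{0\}$, then $S\pitchfork T$ in $V$.
   Context: The asymptotic cone $S\infty$ of a subset $S\subset V$ is the closed cone consisting of all limits $\lim_{n\to\infty}\varepsilon_n x_n$ with $x_n\in S$ and $\varepsilon_n>0$, $\varepsilon_n\to 0$. For subsets $S,T$ of the additive group $V$, $S\pitchfork T$ means that for every compact subset $C\subset V$ the set $S\cap (C+T+C)$ is relatively compact, where $C+T+C=\{a+x+b:a,b\in C,\ x\in T\}$. *)

(* V = 'rV[R]_n (finite-dimensional real vector space, R : realType). *)
From HB Require Import structures.
From mathcomp Require Import all_boot all_order all_algebra.
From mathcomp Require Import all_classical all_reals all_analysis.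
Set Implicit Arguments. Unset Strict Implicit. Unset Printing Implicit Defensive.
Import Order.TTheory GRing.Theory Num.Theory.
Import numFieldNormedType.Exports.
Local Open Scope classical_set_scope.
Local Open Scope ring_scope.

Definition relatively_compact {T : topologicalType} (A : set T) : Prop :=
  compact (closure A).

Definition asymptotic_cone {R : realType} {n : nat} (S : set 'rV[R]_n) : set 'rV[R]_n :=
  [set y | exists (eps : nat -> R) (x : nat -> 'rV[R]_n),
      (forall k, S (x k)) /\ (forall k, 0 < eps k) /\
      eps @ \oo --> (0 : R) /\ (fun k => eps k *: x k) @ \oo --> y].

Definition sum3 {R : realType} {n : nat} (C T : set 'rV[R]_n) : set 'rV[R]_n :=
  [set z | exists a x b, C a /\ T x /\ C b /\ z = a + x + b].

Definition pitchfork {R : realType} {n : nat} (S T : set 'rV[R]_n) : Prop :=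
  forall C : set 'rV[R]_n, compact C -> relatively_compact (S `&` sum3 C T).

(** Suppose [S ∩ (C + T + C)] were unbounded for some compact [C].
    Normalising an unbounded sequence of its points and extracting a
    convergent subsequence on the compact unit sphere yields a unit vector [y]
    in the asymptotic cone of [S ∩ (C + T + C)].  This cone lies in [S∞], and
    also in [T∞], because the bounded summands from [C] vanish after rescaling
    by factors tending to [0].  So [y ∈ S∞ ∩ T∞ = {0}], a contradiction.
    Hence [S ∩ (C + T + C)] is bounded, and bounded subsets of ['rV[R]_n] are
    relatively compact. *)

From mathcomp Require Import all_boot all_order all_algebra.
From mathcomp Require Import all_classical all_reals all_analysis.
Set Implicit Arguments. Unset Strict Implicit. Unset Printing Implicit Defensive.
Import Order.TTheory GRing.Theory Num.Theory.
Import numFieldNormedType.Exports.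
Local Open Scope classical_set_scope.
Local Open Scope ring_scope.

Section sequences_in_normed_spaces.
Context {R : realType} {V : normedModType R}.

Lemma cvg_dist_le_harmonic (u : nat -> V) (y : V) :
  (forall m, `|y - u m| <= harmonic m) -> u @ \oo --> y.
Proof.
move=> uy; apply/subr_cvg0; apply: norm_cvg0.
apply: (squeeze_cvgr _ (cvg_cst 0) cvg_harmonic).
by near=> m; rewrite normr_ge0 distrC uy.
Unshelve. all: end_near. Qed.

Lemma compact_seq_cvg_along (K : set V) (u : nat -> V) :
  compact K -> (forall k, K (u k)) ->
  exists2 y, K y & exists2 phi : nat -> nat,
    (forall m, m <= phi m)%N & u \o phi @ \oo --> y.
Proof.
move=> cK Ku.
have [|y [Ky clu]] := cK (u @ \oo) (fmap_proper_filter _ _).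
  by exists 0%N => // k _; exact: Ku.
have /choice [phi phiP] :
    forall m, exists k, (m <= k)%N /\ `|y - u k| <= harmonic m.
  move=> m.
  have uge : (u @ \oo) (u @` [set k | (m <= k)%N]).
    by exists m => // k; exists k.
  have [_ [[k mk <-] yuk]] := clu _ _ uge (nbhsx_ballx y _ (harmonic_gt0 m)).
  by exists k; split => //; rewrite -ball_normE in yuk; exact: ltW.
exists y => //; exists phi; first by move=> m; case: (phiP m).
by apply: cvg_dist_le_harmonic => m; case: (phiP m).
Qed.

End sequences_in_normed_spaces.

Section asymptotic_cone.
Context {R : realType} {n : nat}.
Implicit Types (A B C T : set 'rV[R]_n).

Lemma bounded_relatively_compact A : bounded_set A -> relatively_compact A.
Proof.
move=> bA; apply: bounded_closed_compact; last exact: closed_closure.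
rewrite /bounded_near /=; near=> M.
have AM : A `<=` [set x | `|x| <= M] by near: M.
have Mcl : closed [set x : 'rV[R]_n | `|x| <= M].
  by apply: preimage_closed (@closed_le _ M) => x _; exact: norm_continuous.
by move=> x /(closureS AM); rewrite -((closure_id _).1 Mcl).
Unshelve. all: end_near. Qed.

Lemma compact_unit_sphere : compact [set x : 'rV[R]_n | `|x| = 1].
Proof.
apply: bounded_closed_compact.
  rewrite /bounded_near /=; near=> M => x /= ->.
  by near: M; apply: nbhs_pinfty_ge; rewrite num_real.
by apply: preimage_closed (@closed_eq _ 1) => x _; exact: norm_continuous.
Unshelve. all: end_near. Qed.

Lemma unbounded_set_seq A : ~ bounded_set A ->
  exists s : nat -> 'rV[R]_n, forall k, A (s k) /\ k.+1%:R < `|s k|.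
Proof.
move=> Aunb.
suff /choice [s sP] : forall k, exists s, A s /\ k.+1%:R < `|s| by exists s.
move=> k; apply: contrapT => noS; apply: Aunb.
rewrite /bounded_near /=; near=> M => x Ax /=; apply: (@le_trans _ _ k.+1%:R).
  by rewrite leNgt; apply/negP => ltx; apply: noS; exists x.
by near: M; apply: nbhs_pinfty_ge; rewrite num_real.
Unshelve. all: end_near. Qed.

Lemma asymptotic_coneS A B :
  A `<=` B -> asymptotic_cone A `<=` asymptotic_cone B.
Proof.
by move=> AB y [eps [x [Ax epsx]]]; exists eps, x; split => // k; apply: AB.
Qed.

Lemma asymptotic_cone_sum3 C T :
  bounded_set C -> asymptotic_cone (sum3 C T) `<=` asymptotic_cone T.
Proof.
move=> /ex_strict_bound_gt0 [M _ CM] y [eps [x [xCT [eps_gt0 [eps0 epsxy]]]]].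
have /choice [t Tt] : forall k, exists t, T t /\ `|x k - t| <= M + M.
  move=> k; have [a [t [b [Ca [Tt [Cb ->]]]]]] := xCT k.
  exists t; split => //; rewrite addrAC addrK (le_trans (ler_normD _ _)) //.
  by rewrite lerD // ltW // CM.
exists eps, t; split; first by move=> k; case: (Tt k).
do 2 split => //.
have eps_small : (fun k => eps k *: (x k - t k)) @ \oo --> (0 : 'rV[R]_n).
  have eps_M : (fun k => eps k * (M + M)) @ \oo --> 0.
    by rewrite -(mul0r (M + M)); apply: cvgMl.
  apply: norm_cvg0; apply: (squeeze_cvgr _ (cvg_cst 0) eps_M).
  near=> k; rewrite normr_ge0 normrZ gtr0_norm // ler_pM2l //=.
  by case: (Tt k).
have -> : (fun k => eps k *: t k) =
          (fun k => eps k *: x k - eps k *: (x k - t k)).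
  by apply/funext => k; rewrite -scalerBr opprB addrC subrK.
by rewrite -[y]subr0; apply: cvgB.
Unshelve. all: end_near. Qed.

Lemma unbounded_asymptotic_cone A :
  ~ bounded_set A -> exists2 y, asymptotic_cone A y & y != 0.
Proof.
move=> /unbounded_set_seq [s /all_and2 [As s_big]].
have s_gt0 k : 0 < `|s k| by apply: lt_trans (s_big k).
pose u k := `|s k|^-1 *: s k.
have u_sphere k : `|u k| = 1 by rewrite normrZ normfV normr_id mulVf // gt_eqF.
have [y /= y1 [phi phi_ge uy]] :=
  compact_seq_cvg_along compact_unit_sphere u_sphere.
exists y; last by rewrite -normr_eq0 y1 oner_eq0.
exists (fun m => `|s (phi m)|^-1), (s \o phi).
split; first by move=> m; exact: As.
split; first by move=> m; rewrite invr_gt0.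
split; last exact: uy.
apply: cvg_dist_le_harmonic => m.
rewrite sub0r normrN normfV normr_id lef_pV2 ?posrE ?ltr0n //.
apply/ltW/(le_lt_trans _ (s_big (phi m))); rewrite ler_nat ltnS; exact: phi_ge.
Qed.

End asymptotic_cone.

Theorem lemma7p3 (R : realType) (n : nat) (S T : set 'rV[R]_n) :
  asymptotic_cone S `&` asymptotic_cone T = [set 0] -> pitchfork S T.
Proof.
move=> ST0 C cC; apply: bounded_relatively_compact.
apply: contrapT => /unbounded_asymptotic_cone [y yST y_neq0].
have : (asymptotic_cone S `&` asymptotic_cone T) y.
  split; first exact: asymptotic_coneS (@subIsetl _ _ _) _ yST.
  apply: asymptotic_cone_sum3 (compact_bounded cC) _ _.
  exact: asymptotic_coneS (@subIsetr _ _ _) _ yST.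
by rewrite ST0 => /eqP; apply/negP.
Qed.
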